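(* Let $q$ be a prime power, $n\ge 2$, $\lambda$ a nontrivial additive character of $\mathbb{F}_q$, and $x\in\mathbb{F}_q^*$. Then \[ \left|\sum_{\alpha_1,\ldots,\alpha_{n-1}\in\mathbb{F}_q^*}\lambda\!\left(\alpha_1+\cdots+\alpha_{n-1}+\frac{x}{\alpha_1\cdots\alpha_{n-1}}\right)\right| \le \left(1-\frac{1}{q-1}\right)q^{n/2}+\frac{1}{q-1}. \] *)

From mathcomp Require Import all_boot all_order all_algebra all_field.
Set Implicit Arguments. Unset Strict Implicit. Unset Printing Implicit Defensive.
Import Order.TTheory GRing.Theory Num.Theory.
Local Open Scope ring_scope.

Definition additive_character (F : finFieldType) (lam : F -> algC) : Prop :=
  (forall a b : F, lam (a + b) = lam a * lam b) /\ (forall a : F, lam a != 0).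

Definition nontrivial_character (F : finFieldType) (lam : F -> algC) : Prop :=
  exists a : F, lam a != 1.

(* Expand the Kloosterman sum in the multiplicative characters chi of F^*:
   (q - 1) K(x) = sum_chi g(chi)^n conj(chi x), where g(chi) is the Gauss sum
   of chi and lam.  The trivial character has g = -1 and every other one has
   |g| = sqrt q, so the triangle inequality gives
   (q - 1) |K(x)| <= 1 + (q - 2) q^(n/2). *)

From mathcomp Require Import all_boot all_order all_algebra all_field.
From mathcomp Require Import all_fingroup all_solvable all_character.
From mathcomp Require Import zify.
Set Implicit Arguments. Unset Strict Implicit. Unset Printing Implicit Defensive.
Import Order.TTheory GRing.Theory Num.Theory.
Local Open Scope ring_scope.

Section MultiplicativeCharacters.

Variable F : finFieldType.
Local Notation U := {unit F}.
Local Notation G := [set: {unit F}]%G.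

Definition mchar (i : Iirr G) (a : F) : algC :=
  if (insub a : option U) is Some u then 'chi_i u else 0.

Lemma mchar_val i (u : U) : mchar i (val u) = 'chi_i u.
Proof. by rewrite /mchar valK. Qed.

Lemma mchar0 i : mchar i 0 = 0.
Proof. by rewrite /mchar insubF // unitfE eqxx. Qed.

Lemma units_cyclic : cyclic G.
Proof. exact: field_unit_group_cyclic. Qed.

Lemma units_lin_char i : 'chi[G]_i \is a linear_char.
Proof. exact/irr_cyclic_lin/units_cyclic. Qed.

Lemma card_Iirr_units : #|Iirr G| = #|F|.-1.
Proof. by rewrite card_Iirr_cyclic ?card_finField_unit ?units_cyclic. Qed.

Lemma mcharE i a (a0 : a != 0) :
  mchar i a = 'chi_i (Sub a (etrans (unitfE a) a0) : U).
Proof. by rewrite -mchar_val SubK. Qed.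

Lemma mcharM i a b : mchar i (a * b) = mchar i a * mchar i b.
Proof.
have [->|a0] := eqVneq a 0; first by rewrite mul0r mchar0 mul0r.
have [->|b0] := eqVneq b 0; first by rewrite mulr0 mchar0 mulr0.
rewrite (mcharE i a0) (mcharE i b0) -lin_charM ?inE ?units_lin_char //.
by rewrite -mchar_val FinRing.val_unitM.
Qed.

Lemma mchar1 i : mchar i 1 = 1.
Proof. by rewrite (mchar_val i 1%g) lin_char1 ?units_lin_char. Qed.

Lemma mchar_prod i (I : finType) (f : I -> F) :
  mchar i (\prod_k f k) = \prod_k mchar i (f k).
Proof. exact: (big_morph _ (mcharM i) (mchar1 i)). Qed.

Lemma conj_mchar i a : a != 0 -> (mchar i a)^* = mchar i a^-1.
Proof.
move=> a0; rewrite (mcharE i a0) -lin_charV_conj ?inE ?units_lin_char //.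
by rewrite -mchar_val FinRing.val_unitV.
Qed.

Lemma norm_mchar i a : a != 0 -> `|mchar i a| = 1.
Proof. by move=> a0; rewrite (mcharE i a0) normC_lin_char ?inE ?units_lin_char. Qed.

Lemma mchar_triv a : a != 0 -> mchar 0 a = 1.
Proof. by move=> a0; rewrite (mcharE 0 a0) irr0 cfun1E inE. Qed.

Lemma sum_units (g : F -> algC) : \sum_(u : U) g (val u) = \sum_(a | a != 0) g a.
Proof.
rewrite (reindex_onto (fun u : U => val u) (insubd (1%g : U))) /=; last first.
  by move=> a a0; rewrite insubdK // unitfE.
by apply: eq_bigl => u; rewrite valKd eqxx andbT -unitfE (valP u).
Qed.

Lemma sum_mchar i : i != 0 -> \sum_a mchar i a = 0.
Proof.
move=> i0; rewrite (bigD1 0) //= mchar0 add0r -sum_units.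
have := first_orthogonality_relation i 0.
rewrite (negPf i0) irr0 => /eqP; rewrite mulf_eq0 invr_eq0 pnatr_eq0.
rewrite eqn0Ngt cardG_gt0 /= => /eqP; apply: etrans.
by apply: eq_big => [u|u _]; rewrite ?inE // mchar_val cfun1E groupV inE mulr1.
Qed.

Lemma sum_mchar_mul_conj a b : b != 0 ->
  \sum_i mchar i a * (mchar i b)^* = (#|F|.-1)%:R *+ (a == b).
Proof.
move=> b0; have [->|a0] := eqVneq a 0.
  rewrite big1 => [|i _]; last by rewrite mchar0 mul0r.
  by rewrite eq_sym (negPf b0).
under eq_bigr do rewrite (mcharE _ a0) (mcharE _ b0).
rewrite second_orthogonality_relation ?inE //.
rewrite (abelian_classP _ (cyclic_abelian units_cyclic)) ?inE //.
have -> : ('C_G[Sub a (etrans (unitfE a) a0) : U])%g = G.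
  apply/setIidPl/subsetP => w _; apply/cent1P.
  by apply: val_inj; rewrite !FinRing.val_unitM mulrC.
by rewrite card_finField_unit -val_eqE.
Qed.

End MultiplicativeCharacters.

Section AdditiveCharacter.

Variables (F : finFieldType) (lam : F -> algC).
Hypothesis lam_char : additive_character lam.
Hypothesis lam_nontriv : nontrivial_character lam.

Let lamD : forall a b, lam (a + b) = lam a * lam b. Proof. by case: lam_char. Qed.
Let lam_neq0 : forall a, lam a != 0. Proof. by case: lam_char. Qed.

Lemma addchar0 : lam 0 = 1.
Proof. by apply: (mulfI (lam_neq0 0)); rewrite -lamD addr0 mulr1. Qed.

Lemma addchar_sum (I : finType) (f : I -> F) :
  lam (\sum_k f k) = \prod_k lam (f k).
Proof. exact: (big_morph _ lamD addchar0). Qed.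

Lemma addcharN a : lam (- a) = (lam a)^-1.
Proof. by apply: (mulfI (lam_neq0 a)); rewrite -lamD subrr addchar0 mulfV. Qed.

Lemma sum_addchar : \sum_a lam a = 0.
Proof.
have [b lamb1] := lam_nontriv.
have : \sum_a lam a = lam b * \sum_a lam a.
  by rewrite mulr_sumr (reindex_inj (addrI b)); apply: eq_bigr => a _; rewrite lamD.
move/eqP; rewrite -subr_eq0 -{1}[\sum_a lam a]mul1r -mulrBl mulf_eq0 subr_eq0.
by rewrite eq_sym (negPf lamb1) => /eqP.
Qed.

(* Translating the product of all values of lam by b multiplies it by lam b ^+ q. *)
Lemma addchar_expr_card b : lam b ^+ #|F| = 1.
Proof.
have prod_neq0 : \prod_a lam a != 0 by apply/prodf_neq0 => a _.
apply: (mulIf prod_neq0); rewrite mul1r {2}(reindex_inj (addrI b)) /=.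
by under [RHS]eq_bigr do rewrite lamD; rewrite big_split prodr_const.
Qed.

Lemma norm_addchar b : `|lam b| = 1.
Proof.
apply/eqP; rewrite -(@pexpr_eq1 _ _ #|F|) ?normr_ge0 //.
  by rewrite -normrX addchar_expr_card normr1.
by apply/card_gt0P; exists 0.
Qed.

Lemma conj_addchar b : (lam b)^* = lam (- b).
Proof. by rewrite addcharN invC_norm norm_addchar expr1n invr1 mul1r. Qed.

Lemma sum_addchar_scale c : \sum_b lam (c * b) = (c == 0)%:R * #|F|%:R.
Proof.
have [->|c0] := eqVneq c 0.
  by under eq_bigr do rewrite mul0r addchar0; rewrite sumr_const mul1r.
rewrite mul0r (reindex_inj (mulfI (invr_neq0 c0))) /=.
by under eq_bigr do rewrite mulrA mulfV // mul1r; rewrite sum_addchar.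
Qed.

Definition gauss_sum (i : Iirr [set: {unit F}]%G) := \sum_a mchar i a * lam a.

Lemma gauss_sum_triv : gauss_sum 0 = -1.
Proof.
have := sum_addchar; rewrite (bigD1 0) //= addchar0 => /eqP.
rewrite addrC addr_eq0 => /eqP <-.
rewrite /gauss_sum (bigD1 0) //= mchar0 mul0r add0r.
by apply: eq_bigr => a a0; rewrite mchar_triv ?mul1r.
Qed.

(* Substituting a = t b in the first factor of g(chi) conj(chi(b) lam(b)) leaves
   a sum over b of lam((t - 1) b), which vanishes unless t = 1. *)
Lemma gauss_sum_mul_conj i : i != 0 -> gauss_sum i * (gauss_sum i)^* = #|F|%:R.
Proof.
move=> i0; rewrite {2}/gauss_sum rmorph_sum mulr_sumr (bigD1 0) //=.
rewrite mchar0 mul0r rmorph0 mulr0 add0r.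
have substitute b : b != 0 ->
    gauss_sum i * (mchar i b * lam b)^* = \sum_t mchar i t * lam ((t - 1) * b).
  move=> b0; rewrite rmorphM /= conj_mchar // conj_addchar /gauss_sum mulr_suml.
  rewrite (reindex_inj (mulIf b0)) /=; apply: eq_bigr => t _.
  by rewrite mulrACA -mcharM -lamD mulfK // mulrBl mul1r.
have sum_nonzero t : \sum_(b | b != 0) lam ((t - 1) * b) = (t == 1)%:R * #|F|%:R - 1.
  have := sum_addchar_scale (t - 1).
  by rewrite (bigD1 0) //= mulr0 addchar0 subr_eq0 => <-; rewrite addrAC subrr add0r.
rewrite (eq_bigr _ substitute) exchange_big /=.
under eq_bigr do rewrite -mulr_sumr sum_nonzero mulrBr mulr1.
rewrite sumrB sum_mchar // subr0 (bigD1 1) //= eqxx mul1r mchar1 mul1r.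
by rewrite big1 ?addr0 // => t /negPf ->; rewrite mul0r mulr0.
Qed.

Lemma norm_gauss_sum i :
  `|gauss_sum i| = if i == 0 then 1 else sqrtC #|F|%:R.
Proof.
case: eqP => [->|/eqP i0]; first by rewrite gauss_sum_triv normrN normr1.
by rewrite normC_def gauss_sum_mul_conj.
Qed.

End AdditiveCharacter.

(* The tuples of length m + 2 with product x are parametrized by their first
   m + 1 entries, which must all be nonzero. *)
Lemma sum_fiber_prod (F : finFieldType) (V : zmodType) (g : F -> V) m x :
  x != 0 ->
  \sum_(f : {ffun 'I_m.+2 -> F} | \prod_k f k == x) g (\sum_k f k) =
  \sum_(a : {ffun 'I_m.+1 -> F} | [forall i, a i != 0])
    g (\sum_i a i + x / \prod_i a i).
Proof.
move=> x0.
pose ext (a : {ffun 'I_m.+1 -> F}) : {ffun 'I_m.+2 -> F} :=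
  [ffun j : 'I_m.+2 => if (j < m.+1)%N then a (inord j) else x / \prod_i a i].
pose restr (f : {ffun 'I_m.+2 -> F}) : {ffun 'I_m.+1 -> F} :=
  [ffun i => f (widen_ord (leqnSn _) i)].
have ext_widen a i : ext a (widen_ord (leqnSn _) i) = a i.
  by rewrite ffunE /= ltn_ord inord_val.
have ext_max a : ext a ord_max = x / \prod_i a i by rewrite ffunE /= ltnn.
have prod_ext a : \prod_(i < m.+1) ext a (widen_ord (leqnSn _) i) = \prod_i a i.
  by apply: eq_bigr => i _; rewrite ext_widen.
have restrK a : restr (ext a) = a by apply/ffunP => i; rewrite ffunE ext_widen.
rewrite (reindex_onto ext restr) => [|f /eqP prod_f]; last first.
  have prod_restr : \prod_i f (widen_ord (leqnSn _) i) = \prod_i restr f i.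
    by apply: eq_bigr => i _; rewrite ffunE.
  have restr_neq0 : \prod_i restr f i != 0.
    by apply: contraNneq x0 => p0; rewrite -prod_f big_ord_recr /= prod_restr p0 mul0r.
  apply/ffunP => j; rewrite ffunE; case: ifP => [lt_jm|ge_jm].
    by rewrite ffunE; congr (f _); apply: val_inj; rewrite /= inordK.
  have -> : j = ord_max by apply: val_inj; move: (ltn_ord j) ge_jm => /=; lia.
  by rewrite -prod_f big_ord_recr /= prod_restr mulrC mulrA mulVf // mul1r.
apply: eq_big => [a|a _]; last first.
  by rewrite big_ord_recr /= ext_max; congr (g (_ + _)); apply: eq_bigr.
rewrite restrK eqxx andbT big_ord_recr /= ext_max prod_ext.
have [p0|p_neq0] := eqVneq (\prod_i a i) 0.
  rewrite p0 mul0r eq_sym (negPf x0); apply/esym/negbTE.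
  move/eqP/prodf_eq0: p0 => [i _ ai0].
  by apply/forallP => /(_ i); rewrite ai0.
rewrite mulrC mulfVK // eqxx; apply/esym/forallP => i.
by apply: contraNneq p_neq0 => ai0; rewrite (bigD1 i) //= ai0 mul0r.
Qed.

Lemma kloosterman_mchar_expansion (F : finFieldType) (lam : F -> algC) m x :
  additive_character lam -> x != 0 ->
  (#|F|.-1)%:R * \sum_(a : {ffun 'I_m.+1 -> F} | [forall i, a i != 0])
      lam (\sum_i a i + x / \prod_i a i)
  = \sum_i gauss_sum lam i ^+ m.+2 * (mchar i x)^*.
Proof.
move=> lam_char x0; rewrite -sum_fiber_prod //.
have gauss_sum_expr i : gauss_sum lam i ^+ m.+2 =
    \sum_(f : {ffun 'I_m.+2 -> F}) mchar i (\prod_k f k) * lam (\sum_k f k).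
  rewrite -[in LHS](card_ord m.+2) -prodr_const /gauss_sum bigA_distr_bigA /=.
  by apply: eq_bigr => f _; rewrite big_split mchar_prod addchar_sum.
under [RHS]eq_bigr do rewrite gauss_sum_expr mulr_suml.
rewrite exchange_big mulr_sumr big_mkcond /=; apply: eq_bigr => f _.
under [RHS]eq_bigr do rewrite mulrAC mulrC.
rewrite -mulr_sumr sum_mchar_mul_conj //.
by case: eqP => _; rewrite ?mulr1n ?mulr0n ?mulr0 // mulrC.
Qed.

Lemma sum_norm_gauss_sum_expr (F : finFieldType) (lam : F -> algC) m x :
  additive_character lam -> nontrivial_character lam -> x != 0 ->
  \sum_i `|gauss_sum lam i ^+ m * (mchar i x)^*|
  = 1 + ((#|F|.-1)%:R - 1) * sqrtC #|F|%:R ^+ m.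
Proof.
move=> lam_char lam_nontriv x0.
under eq_bigr do rewrite normrM norm_conjC norm_mchar // mulr1 normrX norm_gauss_sum //.
rewrite (bigD1 0) //= expr1n; congr (_ + _).
rewrite (eq_bigr (fun _ => sqrtC #|F|%:R ^+ m)) => [|i /negPf -> //].
rewrite sumr_const; set s := sqrtC _ ^+ m.
have := cardD1 (0 : Iirr [set: {unit F}]%G) predT.
rewrite card_Iirr_units inE /= => ->; rewrite natrD addrAC subrr add0r mulr_natl.
by congr (_ *+ _); apply: eq_card => i; rewrite !inE andbT.
Qed.

Theorem corollary1 (F : finFieldType) (n : nat) (lam : F -> algC) (x : F)
  (hn : (2 <= n)%N)
  (hchar : additive_character lam) (hnt : nontrivial_character lam)
  (hx : x != 0) :
  `| \sum_(a : {ffun 'I_n.-1 -> F} | [forall i, a i != 0])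
       lam (\sum_(i < n.-1) a i + x / \prod_(i < n.-1) a i) |
  <= (1 - 1 / (#|F|.-1)%:R) * sqrtC (#|F|%:R) ^+ n + 1 / (#|F|.-1)%:R.
Proof.
case: n hn => [|[|m]] // _.
set K := \sum_(a | _) _.
set c : algC := (#|F|.-1)%:R.
have c_gt0 : 0 < c by rewrite ltr0n -subn1 subn_gt0 card_finNzRing_gt1.
have -> : K = c^-1 * \sum_i gauss_sum lam i ^+ m.+2 * (mchar i x)^*.
  by rewrite -kloosterman_mchar_expansion // mulKf ?gt_eqF.
rewrite normrM normfV (gtr0_norm c_gt0).
have cV_ge0 : 0 <= c^-1 by rewrite invr_ge0 ltW.
apply: le_trans (ler_wpM2l cV_ge0 (ler_norm_sum _ _ _)) _.
rewrite sum_norm_gauss_sum_expr // -/c mulrDr mulrA mulrBr !mulr1 mulVf ?gt_eqF //.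
by rewrite div1r addrC.
Qed.
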